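(* Let $T$ be a PQ-tree with leaf set $E$, let $\vartriangleleft$ be a binary relation on $E$, and let $S$ be a subtree of $T$ with leaf set $E_S$. Suppose $T$ has a reordering compatible with $\vartriangleleft$. Let $S'$ be any reordering of $S$ (obtained by reordering operations applied only at inner nodes of $S$) such that for all $a,b\in E_S$, $a\vartriangleleft b$ implies $a<_{S'} b$. Then there exists a reordering $T'$ of $T$ compatible with $\vartriangleleft$ such that, for every inner node of $S$, the order of its children in $T'$ coincides with that in $S'$.
   Context: A PQ-tree on a finite set $E$ is a rooted tree whose leaves are in one-to-one correspondence with the elements of $E$, whose inner nodes are each either a P-node or a Q-node, each inner node has at least two children, and for each inner node a linear order of its children is fixed. $<_T$ denotes the linear ordering of $E$ obtained by reading the leaves of $T$ from left to right. The allowed reordering operations are: permuting the children of a P-node arbitrarily, and reversing the order of the children of a Q-node. A tree $T'$ is a reordering of $T$ if it is obtained from $T$ by finitely many such operations. A subtree consists of one inner node and all its descendants; it is itself a PQ-tree and $<_S$ is defined likewise. A reordering $T'$ is compatible with a relation $\vartriangleleft$ on $E$ if $a\vartriangleleft b$ implies $a<_{T'} b$ for all $a,b\in E$. *)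

From Stdlib Require Import List.
From Stdlib Require Import Permutation Relation_Operators.
From mathcomp Require Import all_boot.
Set Implicit Arguments. Unset Strict Implicit. Unset Printing Implicit Defensive.

Inductive pqtree (E : Type) : Type :=
| Leaf of E
| Pnode of seq (pqtree E)
| Qnode of seq (pqtree E).
Arguments Leaf {E}. Arguments Pnode {E}. Arguments Qnode {E}.

Section PQ.
Variable E : finType.

Fixpoint leaves (t : pqtree E) : seq E :=
  match t with
  | Leaf e => [:: e]
  | Pnode cs => flatten (map leaves cs)
  | Qnode cs => flatten (map leaves cs)
  end.

Fixpoint wf_inner (t : pqtree E) : bool :=
  match t with
  | Leaf _ => true
  | Pnode cs => (1 < size cs) && all wf_inner cs
  | Qnode cs => (1 < size cs) && all wf_inner cs
  end.

Definition is_pqtree (t : pqtree E) : Prop :=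
  wf_inner t /\ uniq (leaves t) /\ (forall e : E, e \in leaves t).

Definition is_inner (t : pqtree E) : bool :=
  if t is Leaf _ then false else true.

Definition ltT (t : pqtree E) (a b : E) : Prop :=
  index a (leaves t) < index b (leaves t).

Inductive reorder_step : pqtree E -> pqtree E -> Prop :=
| step_perm cs cs' : Permutation cs cs' -> reorder_step (Pnode cs) (Pnode cs')
| step_rev cs : reorder_step (Qnode cs) (Qnode (rev cs))
| step_inP l c c' r : reorder_step c c' ->
    reorder_step (Pnode (l ++ c :: r)) (Pnode (l ++ c' :: r))
| step_inQ l c c' r : reorder_step c c' ->
    reorder_step (Qnode (l ++ c :: r)) (Qnode (l ++ c' :: r)).

Definition reordering (t t' : pqtree E) : Prop :=
  clos_refl_trans (pqtree E) reorder_step t t'.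

Inductive occurs_in (s : pqtree E) : pqtree E -> Prop :=
| occ_here : occurs_in s s
| occ_P c cs : occurs_in s c -> List.In c cs -> occurs_in s (Pnode cs)
| occ_Q c cs : occurs_in s c -> List.In c cs -> occurs_in s (Qnode cs).

Definition subtree (s t : pqtree E) : Prop := is_inner s /\ occurs_in s t.

Definition compatible (rel : E -> E -> Prop) (t : pqtree E) : Prop :=
  forall a b : E, rel a b -> ltT t a b.

End PQ.

(* Let T0 be a reordering of T compatible with the relation.  Reordering
   operations never destroy a subtree, they only reorder it: the subtree S
   of T reappears in T0 as some reordering S0 of S.  Writing T0 as S0
   plugged into a one-hole context C, we take T' := C[S'].  Since S0 and S'
   are both reorderings of S, T' is a reordering of T0, hence of T, and S'
   occurs in T'.  For compatibility, the leaf sequence of C[X] is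
   P ++ leaves X ++ Q for fixed P, Q; replacing the middle block leaves(S0)
   by its permutation leaves(S') keeps every comparison with a leaf outside
   the block, and comparisons inside the block are guaranteed by the
   hypothesis on S'. *)

From mathcomp Require Import all_boot zify.
From Stdlib Require List.
From Stdlib Require Import Permutation Relation_Operators.
Set Implicit Arguments. Unset Strict Implicit.

(* Replacing a block L of P ++ L ++ Q by a permutation L' preserves the
   relative order of two elements as soon as L' preserves it whenever both
   elements lie in L: positions are compared with the first occurrence, and
   the first occurrence in the block moves only within the block. *)
Lemma index_cat_middle (T : eqType) (P L L' Q : seq T) (a b : T) :
  perm_eq L L' ->
  (a \in L -> b \in L -> index a L' < index b L') ->
  index a (P ++ L ++ Q) < index b (P ++ L ++ Q) ->
  index a (P ++ L' ++ Q) < index b (P ++ L' ++ Q).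
Proof.
move=> pLL' inL.
have memL := perm_mem pLL'; have sizeL := perm_size pLL'.
rewrite !index_cat -!memL -!sizeL.
have ltaP := index_mem a P; have ltbP := index_mem b P.
have ltaL := index_mem a L; have ltbL := index_mem b L.
have ltaL' := index_mem a L'; have ltbL' := index_mem b L'.
rewrite -sizeL -!memL in ltaL' ltbL'.
case aP: (a \in P); case bP: (b \in P); rewrite ?aP ?bP in ltaP ltbP;
  case aL: (a \in L); case bL: (b \in L);
  rewrite ?aL ?bL in inL ltaL ltbL ltaL' ltbL' => //=; try lia.
Qed.

Lemma In_rev (A : Type) (a : A) (l : seq A) : List.In a l -> List.In a (rev l).
Proof.
elim: l => [//|a' l IH] /= [->|inl]; rewrite rev_cons -cats1; apply: List.in_or_app.
- by right; left.
- by left; apply: IH.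
Qed.

Lemma perm_flatten_rev (T : eqType) (ss : seq (seq T)) : perm_eq (flatten (rev ss)) (flatten ss).
Proof.
elim: ss => [//|s ss IH]; rewrite rev_cons flatten_rcons /=.
by rewrite perm_catC perm_cat2l.
Qed.

Section Reorderings.
Variable E : finType.
Implicit Types (t s x y : pqtree E) (cs : seq (pqtree E)).

Definition children t : seq (pqtree E) :=
  if t is (Pnode cs | Qnode cs) then cs else [::].

Lemma reorder_step_sym t t' : reorder_step t t' -> reorder_step t' t.
Proof.
elim=> {t t'} [cs cs' /Permutation_sym|cs|l c c' r _|l c c' r _].
- exact: step_perm.
- by have := step_rev (rev cs); rewrite revK.
- exact: step_inP.
- exact: step_inQ.
Qed.

Lemma reordering_sym t t' : reordering t t' -> reordering t' t.
Proof.
elim=> {t t'} [x y /reorder_step_sym|x|x y z _ Hyx _ Hzy].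
- exact: rt_step.
- exact: rt_refl.
- exact: rt_trans Hzy Hyx.
Qed.

Lemma perm_flatten_leaves cs cs' : Permutation cs cs' ->
  perm_eq (flatten (map (@leaves E) cs)) (flatten (map (@leaves E) cs')).
Proof.
elim=> {cs cs'} //= [x l l' _ H|x y l|l l' l'' _ H1 _ H2].
- by rewrite perm_cat2l.
- by rewrite !catA perm_cat2r perm_catC.
- exact: seq.perm_trans H1 H2.
Qed.

Lemma reorder_step_leaves t t' : reorder_step t t' -> perm_eq (leaves t) (leaves t').
Proof.
elim=> {t t'} /= [cs cs'|cs|l c c' r _ H|l c c' r _ H].
- exact: perm_flatten_leaves.
- by rewrite map_rev perm_sym perm_flatten_rev.
- by rewrite !map_cat !flatten_cat /= perm_cat2l perm_cat2r.
- by rewrite !map_cat !flatten_cat /= perm_cat2l perm_cat2r.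
Qed.

Lemma reordering_leaves t t' : reordering t t' -> perm_eq (leaves t) (leaves t').
Proof.
elim=> {t t'} [x y|x|x y z _ H1 _ H2].
- exact: reorder_step_leaves.
- exact: perm_refl.
- exact: seq.perm_trans H1 H2.
Qed.

Lemma occurs_in_child s c t :
  occurs_in s c -> List.In c (children t) -> occurs_in s t.
Proof. by case: t => //= cs; [apply: occ_P | apply: occ_Q]. Qed.

Lemma reorder_step_child t t1 c : reorder_step t t1 -> List.In c (children t) ->
  exists2 c1, c1 = c \/ reorder_step c c1 & List.In c1 (children t1).
Proof.
have inner l c0 c0' r : reorder_step c0 c0' -> List.In c (l ++ c0 :: r) ->
    exists2 c1, c1 = c \/ reorder_step c c1 & List.In c1 (l ++ c0' :: r).
  move=> st inc; case: (List.in_app_or _ _ _ inc) => [inl|[<-|inr]].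
  - by exists c; [left|apply: List.in_or_app; left].
  - by exists c0'; [right|apply: List.in_or_app; right; left].
  - by exists c; [left|apply: List.in_or_app; right; right].
case=> /= [cs cs' pcs|cs|l c0 c0' r|l c0 c0' r]; try exact: inner.
- by move=> inc; exists c; [left|apply: Permutation_in inc].
- by move=> inc; exists c; [left|apply: In_rev].
Qed.

Lemma occurs_in_reorder_step s t t1 : occurs_in s t -> reorder_step t t1 ->
  exists2 s1, reordering s s1 & occurs_in s1 t1.
Proof.
move=> occ; elim: occ t1 => {t} [|c cs occ IH inc|c cs occ IH inc] t1 st.
- by exists t1; [apply: rt_step|apply: occ_here].
all: have [c1 [->|stc] inc1] := reorder_step_child st inc;
  first (by exists s; [apply: rt_refl|apply: occurs_in_child occ inc1]).
all: by have [s1 rs1 occ1] := IH _ stc; exists s1; last exact: occurs_in_child occ1 inc1.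
Qed.

Lemma occurs_in_reordering t t0 s : reordering t t0 -> occurs_in s t ->
  exists2 s0, reordering s s0 & occurs_in s0 t0.
Proof.
move=> rt; elim: rt s => {t t0} [x y st|x|x y z _ IHxy _ IHyz] s occ.
- exact: occurs_in_reorder_step occ st.
- by exists s; first exact: rt_refl.
- have [s1 rs1 occ1] := IHxy _ occ; have [s2 rs2 occ2] := IHyz _ occ1.
  by exists s2; first exact: rt_trans rs1 rs2.
Qed.

Inductive context : Type :=
| Hole
| InP of seq (pqtree E) & context & seq (pqtree E)
| InQ of seq (pqtree E) & context & seq (pqtree E).

Fixpoint plug (C : context) x : pqtree E :=
  match C with
  | Hole => x
  | InP l C r => Pnode (l ++ plug C x :: r)
  | InQ l C r => Qnode (l ++ plug C x :: r)
  end.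

Fixpoint ctx_left (C : context) : seq E :=
  match C with
  | Hole => [::]
  | InP l C _ | InQ l C _ => flatten (map (@leaves E) l) ++ ctx_left C
  end.

Fixpoint ctx_right (C : context) : seq E :=
  match C with
  | Hole => [::]
  | InP _ C r | InQ _ C r => ctx_right C ++ flatten (map (@leaves E) r)
  end.

Lemma leaves_plug C x : leaves (plug C x) = ctx_left C ++ leaves x ++ ctx_right C.
Proof.
elim: C => [|l C IH r|l C IH r] /=; first by rewrite cats0.
all: by rewrite map_cat flatten_cat /= IH !catA.
Qed.

Lemma occurs_in_plug C x : occurs_in x (plug C x).
Proof.
elim: C => [|l C IH r|l C IH r]; first exact: occ_here.
all: by apply: occurs_in_child IH _; apply: List.in_or_app; right; left.
Qed.

Lemma plug_reorder_step C x y : reorder_step x y -> reorder_step (plug C x) (plug C y).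
Proof. by elim: C => [|l C IH r|l C IH r] //= st; [apply: step_inP|apply: step_inQ]; apply: IH. Qed.

Lemma plug_reordering C x y : reordering x y -> reordering (plug C x) (plug C y).
Proof.
elim=> {x y} [x y st|x|x y z _ H1 _ H2].
- exact/rt_step/plug_reorder_step.
- exact: rt_refl.
- exact: rt_trans H1 H2.
Qed.

Lemma occurs_in_context s t : occurs_in s t -> exists C, t = plug C s.
Proof.
elim=> {t} [|c cs _ [C ->] inc|c cs _ [C ->] inc]; first by exists Hole.
all: have [l [r ->]] := List.in_split _ _ inc.
- by exists (InP l C r).
- by exists (InQ l C r).
Qed.

End Reorderings.

Theorem mainTheorem2 (E : finType) (rel : E -> E -> Prop) (T S S' : pqtree E) :
  is_pqtree T ->
  subtree S T ->
  (exists T0, reordering T T0 /\ compatible rel T0) ->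
  reordering S S' ->
  (forall a b : E, a \in leaves S -> b \in leaves S -> rel a b -> ltT S' a b) ->
  exists T', [/\ reordering T T', compatible rel T' & occurs_in S' T'].
Proof.
move=> _ [_ occS] [T0 [rT0 compT0]] rS' relS'.
have [S0 rS0 occS0] := occurs_in_reordering rT0 occS.
have [C defT0] := occurs_in_context occS0.
have rS0S' : reordering S0 S' by apply: rt_trans (reordering_sym rS0) rS'.
have memS0 x : x \in leaves S0 = (x \in leaves S) by rewrite (perm_mem (reordering_leaves rS0)).
exists (plug C S'); split; last exact: occurs_in_plug.
- by apply: rt_trans rT0 _; rewrite defT0; apply: plug_reordering.
- move=> a b rab; have := compT0 a b rab; rewrite /ltT defT0 !leaves_plug.
  apply: index_cat_middle; first exact: reordering_leaves rS0S'.
  by rewrite !memS0 => aS bS; apply: relS'.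
Qed.
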